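(* Let $\mathbf{u}_j\in c_0$, $j\in\mathbb{N}_m$, be linearly independent, let $\mathcal{L}:\ell_1(\mathbb{N})\to\mathbb{R}^m$ be $\mathcal{L}(\mathbf{x}):=[\langle\mathbf{u}_j,\mathbf{x}\rangle:j\in\mathbb{N}_m]$, let $\mathbf{y}\in\mathbb{R}^m$ and $\mathcal{M}_{\mathbf{y}}:=\{\mathbf{x}\in\ell_1(\mathbb{N}):\mathcal{L}(\mathbf{x})=\mathbf{y}\}$. Then $\hat{\mathbf{x}}\in\ell_1(\mathbb{N})$ is a solution of $\inf\{\|\mathbf{x}\|_1:\mathbf{x}\in\mathcal{M}_{\mathbf{y}}\}$ if and only if $\hat{\mathbf{x}}\in\mathcal{M}_{\mathbf{y}}$ and there exist $c_j\in\mathbb{R}$, $j\in\mathbb{N}_m$, such that, with $\mathbf{u}:=\sum_{j\in\mathbb{N}_m}c_j\mathbf{u}_j$, $$\hat{\mathbf{x}}\in\|\mathbf{u}\|_\infty\,\mathrm{co}(\mathcal{V}(\mathbf{u})).$$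
   Context: $\ell_1(\mathbb{N})$ is the space of real sequences with $\|\mathbf{x}\|_1=\sum_j|x_j|<\infty$; $c_0$ is the space of real sequences tending to $0$ with norm $\|\mathbf{u}\|_\infty=\sup_j|u_j|$; $\langle\mathbf{u},\mathbf{x}\rangle:=\sum_{j\in\mathbb{N}}u_jx_j$. $\mathbb{N}_m:=\{1,\dots,m\}$. For $\mathbf{u}\in c_0$, $\mathbb{N}(\mathbf{u}):=\{j\in\mathbb{N}:|u_j|=\|\mathbf{u}\|_\infty\}$, and $\mathcal{V}(\mathbf{u}):=\{\mathrm{sign}(u_j)\mathbf{e}_j:j\in\mathbb{N}(\mathbf{u})\}$, where $\mathbf{e}_j$ is the $j$-th unit sequence. $\mathrm{co}(\mathcal{V})$ denotes the set of all finite convex combinations of elements of $\mathcal{V}$. *)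

From Stdlib Require Import Reals Lra.
From Coquelicot Require Import Coquelicot.
Open Scope R_scope.

Definition rseq := nat -> R.

Fixpoint fsum (n : nat) (f : nat -> R) : R :=
  match n with O => 0 | S n' => fsum n' f + f n' end.

Definition in_l1 (x : rseq) : Prop := ex_series (fun j => Rabs (x j)).
Definition norm1 (x : rseq) : R := Series (fun j => Rabs (x j)).

Definition in_c0 (u : rseq) : Prop := is_lim_seq u 0.
Definition norm_inf (u : rseq) : R :=
  real (Lub_Rbar (fun r => exists k, r = Rabs (u k))).

Definition pairing (u x : rseq) : R := Series (fun j => u j * x j).

Definition sgn (r : R) : R :=
  if Rlt_dec 0 r then 1 else if Rlt_dec r 0 then -1 else 0.

Definition unit_seq (j : nat) : rseq := fun k => if Nat.eqb k j then 1 else 0.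

Definition Nmax (u : rseq) (j : nat) : Prop := Rabs (u j) = norm_inf u.

Definition Vset (u : rseq) (v : rseq) : Prop :=
  exists j, Nmax u j /\ v = (fun k => sgn (u j) * unit_seq j k).

Definition conv_hull (V : rseq -> Prop) (z : rseq) : Prop :=
  exists (n : nat) (lam : nat -> R) (v : nat -> rseq),
    (forall i, (i < n)%nat -> V (v i)) /\
    (forall i, (i < n)%nat -> 0 <= lam i) /\
    fsum n lam = 1 /\
    z = (fun k => fsum n (fun i => lam i * v i k)).

Definition scale_set (r : R) (A : rseq -> Prop) (z : rseq) : Prop :=
  exists w, A w /\ z = (fun k => r * w k).

Definition lin_indep (m : nat) (u : nat -> rseq) : Prop :=
  forall c : nat -> R,
    (forall k, fsum m (fun j => c j * u j k) = 0) ->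
    forall j, (j < m)%nat -> c j = 0.

Definition Lmap (m : nat) (u : nat -> rseq) (x : rseq) : nat -> R :=
  fun j => pairing (u j) x.
Definition My (m : nat) (u : nat -> rseq) (y : nat -> R) (x : rseq) : Prop :=
  in_l1 x /\ forall j, (j < m)%nat -> Lmap m u x j = y j.

Definition is_min_norm_sol (m : nat) (u : nat -> rseq) (y : nat -> R) (xh : rseq) : Prop :=
  My m u y xh /\ forall x, My m u y x -> norm1 xh <= norm1 x.

(* Both directions go through the notion of alignment: x is aligned with w at
   level M when w_k x_k = M |x_k| for all k.  If |w_k| <= M everywhere then
   <w, x> <= M ||x||_1 (weak duality), with equality iff x is aligned, and for
   w in c_0 the vectors of l_1-norm M aligned with w at level M are exactly the
   elements of ||w||_inf co(V(w)).
   - Sufficiency: xh in ||u||_inf co(V(u)) is aligned with u, so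
     ||u||_inf ||xh||_1 = <u, xh> = <u, x> <= ||u||_inf ||x||_1 for every x in M_y.
   - Necessity: minimality says that t y |-> t ||xh||_1 is dominated by the
     l_1-cost of representing t y.  Extending this form one coordinate at a time
     (a finite-dimensional Hahn-Banach argument) yields d in R^m with
     sum_j d_j <u_j, x> <= ||x||_1 on l_1 and sum_j d_j y_j = ||xh||_1; then
     c = ||xh||_1 d gives a combination u with which xh is aligned. *)

From Stdlib Require Import Reals Lra Lia Classical FunctionalExtensionality.
From Coquelicot Require Import Coquelicot.
Open Scope R_scope.

Lemma fsum_ext n f g : (forall i, (i < n)%nat -> f i = g i) -> fsum n f = fsum n g.
Proof.
  induction n as [|n IH]; intros Hfg; simpl; [reflexivity|].
  rewrite IH, Hfg by (auto; intros; apply Hfg; lia); reflexivity.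
Qed.

Lemma fsum_plus n f g : fsum n (fun i => f i + g i) = fsum n f + fsum n g.
Proof. induction n as [|n IH]; simpl; [lra|]. rewrite IH; lra. Qed.

Lemma fsum_scal n c f : fsum n (fun i => c * f i) = c * fsum n f.
Proof. induction n as [|n IH]; simpl; [lra|]. rewrite IH; lra. Qed.

Lemma fsum_delta n f k :
  fsum n (fun i => f i * (if Nat.eqb i k then 1 else 0)) = if Nat.ltb k n then f k else 0.
Proof.
  induction n as [|n IH]; [reflexivity|]. cbn [fsum]. rewrite IH.
  destruct (Nat.eqb_spec n k), (Nat.ltb_spec k n), (Nat.ltb_spec k (S n));
    try lia; subst; lra.
Qed.

(* Bridge to the standard library's partial sums (which have n+1 terms). *)
Lemma fsum_sum_f_R0 n f : fsum (S n) f = sum_f_R0 f n.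
Proof. induction n as [|n IH]; simpl in *; [lra|]. rewrite <- IH; lra. Qed.

Lemma ex_series_zero : ex_series (fun _ : nat => 0).
Proof.
  exists 0. apply is_series_Reals. intros e He. exists 0%nat. intros n _.
  rewrite sum_cte. unfold R_dist. rewrite Rmult_0_l, Rminus_0_r, Rabs_R0. exact He.
Qed.

Lemma Series_zero : Series (fun _ : nat => 0) = 0.
Proof.
  rewrite (Series_ext _ (fun _ => 0 * 0)) by (intros; lra).
  rewrite Series_scal_l. lra.
Qed.

Lemma series_finite_support a n :
  (forall k, (n <= k)%nat -> a k = 0) -> ex_series a /\ Series a = fsum n a.
Proof.
  intros Hsupp. destruct n as [|n].
  - split.
    + apply (ex_series_ext (fun _ => 0)); [intros k; rewrite Hsupp by lia; reflexivity|].
      exact ex_series_zero.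
    + rewrite (Series_ext _ (fun _ => 0)) by (intros k; apply Hsupp; lia). exact Series_zero.
  - assert (Htail : forall k, a (S n + k)%nat = 0) by (intros; apply Hsupp; lia).
    assert (Ha : ex_series a).
    { apply (ex_series_incr_n a (S n)).
      apply (ex_series_ext (fun _ => 0)); [intros k; rewrite Htail; reflexivity|].
      exact ex_series_zero. }
    split; [exact Ha|].
    rewrite (Series_incr_n a (S n)) by (auto; lia). simpl Init.Nat.pred.
    rewrite (Series_ext _ (fun _ => 0)) by auto.
    rewrite Series_zero, fsum_sum_f_R0. lra.
Qed.

Lemma series_nonneg_zero a :
  (forall n, 0 <= a n) -> ex_series a -> Series a = 0 -> forall k, a k = 0.
Proof.
  intros Hpos Ha Hsum k. destruct (Hpos k) as [Hk|Hk]; [exfalso|auto].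
  set (ak := fun n => a k * (if Nat.eqb n k then 1 else 0)).
  assert (Hle : Series ak <= Series a).
  { apply Series_le; auto. intros n. unfold ak.
    destruct (Nat.eqb_spec n k); [subst; lra|]. specialize (Hpos n); lra. }
  destruct (series_finite_support ak (S k)) as [_ Hak].
  { intros n Hn. unfold ak. destruct (Nat.eqb_spec n k); [lia|lra]. }
  rewrite Hak in Hle. unfold ak in Hle. rewrite fsum_delta in Hle.
  destruct (Nat.ltb_spec k (S k)); lia || lra.
Qed.

(* Comparison of convergent series without any sign condition. *)
Lemma series_le a b :
  (forall n, a n <= b n) -> ex_series a -> ex_series b -> Series a <= Series b.
Proof.
  intros Hab Ha Hb.
  assert (Hdiff : 0 <= Series (fun n => b n - a n)).
  { rewrite <- Series_zero. apply Series_le; [intros n; specialize (Hab n); lra|].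
    exact (ex_series_minus b a Hb Ha). }
  rewrite Series_minus in Hdiff by auto. lra.
Qed.

Lemma c0_bounded u : in_c0 u -> exists B, forall k, Rabs (u k) <= B.
Proof.
  intros Hu. destruct (maj_by_pos u) as [B [_ HB]]; [|exists B; exact HB].
  exists 0. apply is_lim_seq_Reals. exact Hu.
Qed.

Lemma c0_comb m (u : nat -> rseq) c :
  (forall j, (j < m)%nat -> in_c0 (u j)) -> in_c0 (fun k => fsum m (fun j => c j * u j k)).
Proof.
  induction m as [|m IH]; intros hu; unfold in_c0; cbn [fsum].
  - apply is_lim_seq_const.
  - replace (Finite 0) with (Finite (0 + c m * 0)) by (f_equal; ring).
    apply is_lim_seq_plus'.
    + apply IH. intros; apply hu; lia.
    + apply (is_lim_seq_scal_l (u m) (c m) 0). apply hu; lia.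
Qed.

Lemma l1_plus x x' : in_l1 x -> in_l1 x' -> in_l1 (fun k => x k + x' k).
Proof.
  intros Hx Hx'.
  apply (ex_series_le (fun k => Rabs (x k + x' k)) (fun k => Rabs (x k) + Rabs (x' k))).
  - intros k. change (norm (Rabs (x k + x' k))) with (Rabs (Rabs (x k + x' k))).
    rewrite Rabs_Rabsolu. apply Rabs_triang.
  - exact (ex_series_plus _ _ Hx Hx').
Qed.

Lemma l1_scal c x : in_l1 x -> in_l1 (fun k => c * x k).
Proof.
  intros Hx. apply (ex_series_ext (fun k => Rabs c * Rabs (x k))).
  - intros k; symmetry; apply Rabs_mult.
  - exact (ex_series_scal_l _ _ Hx).
Qed.

Lemma norm1_scal c x : norm1 (fun k => c * x k) = Rabs c * norm1 x.
Proof. unfold norm1. rewrite <- Series_scal_l. apply Series_ext. intros; apply Rabs_mult. Qed.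

Lemma norm1_nonneg x : in_l1 x -> 0 <= norm1 x.
Proof.
  intros Hx. unfold norm1. rewrite <- Series_zero.
  apply Series_le; [intros; split; [lra|apply Rabs_pos]|exact Hx].
Qed.

Lemma norm1_triangle x x' :
  in_l1 x -> in_l1 x' -> norm1 (fun k => x k + x' k) <= norm1 x + norm1 x'.
Proof.
  intros Hx Hx'. unfold norm1. rewrite <- Series_plus by assumption.
  apply Series_le; [intros; split; [apply Rabs_pos|apply Rabs_triang]|].
  exact (ex_series_plus _ _ Hx Hx').
Qed.

Lemma norm1_support x : in_l1 x -> norm1 x <> 0 -> exists k, x k <> 0.
Proof.
  intros Hx Hnz. apply NNPP. intros Hnone. apply Hnz. unfold norm1.
  rewrite (Series_ext _ (fun _ => 0)); [exact Series_zero|].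
  intros k. destruct (Req_dec (x k) 0) as [E|E]; [rewrite E; apply Rabs_R0|].
  exfalso; eauto.
Qed.

Lemma pairing_ex u x : in_c0 u -> in_l1 x -> ex_series (fun k => u k * x k).
Proof.
  intros Hu Hx. destruct (c0_bounded u Hu) as [B HB].
  apply (ex_series_le (fun k => u k * x k) (fun k => B * Rabs (x k)));
    [|exact (ex_series_scal_l _ _ Hx)].
  intros k. change (norm (u k * x k)) with (Rabs (u k * x k)). rewrite Rabs_mult.
  apply Rmult_le_compat_r; [apply Rabs_pos|apply HB].
Qed.

Lemma pairing_plus u x x' : in_c0 u -> in_l1 x -> in_l1 x' ->
  pairing u (fun k => x k + x' k) = pairing u x + pairing u x'.
Proof.
  intros Hu Hx Hx'. unfold pairing.
  rewrite <- Series_plus by (apply pairing_ex; assumption).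
  apply Series_ext; intros; ring.
Qed.

Lemma pairing_scal u c x : pairing u (fun k => c * x k) = c * pairing u x.
Proof. unfold pairing. rewrite <- Series_scal_l. apply Series_ext; intros; ring. Qed.

Lemma pairing_comb m (u : nat -> rseq) c x :
  (forall j, (j < m)%nat -> in_c0 (u j)) -> in_l1 x ->
  pairing (fun k => fsum m (fun j => c j * u j k)) x = fsum m (fun j => c j * pairing (u j) x).
Proof.
  intros hu Hx. unfold pairing. induction m as [|m IH]; cbn [fsum].
  - rewrite (Series_ext _ (fun _ => 0)) by (intros; ring). exact Series_zero.
  - rewrite (Series_ext _ (fun k => fsum m (fun j => c j * u j k) * x k + c m * (u m k * x k)))
      by (intros; ring).
    rewrite Series_plus, Series_scal_l, IH; [reflexivity|..].
    + intros; apply hu; lia.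
    + apply pairing_ex; [apply c0_comb; intros; apply hu; lia|exact Hx].
    + exact (ex_series_scal_l _ _ (pairing_ex _ _ (hu m ltac:(lia)) Hx)).
Qed.

Lemma unit_seq_series k f : ex_series (fun n => f n * unit_seq k n) /\
  Series (fun n => f n * unit_seq k n) = f k.
Proof.
  destruct (series_finite_support (fun n => f n * unit_seq k n) (S k)) as [Hex Hsum].
  { intros n Hn. unfold unit_seq. destruct (Nat.eqb_spec n k); [lia|ring]. }
  split; [exact Hex|]. rewrite Hsum. unfold unit_seq. rewrite fsum_delta.
  destruct (Nat.ltb_spec k (S k)); [reflexivity|lia].
Qed.

Lemma abs_unit_seq k n : Rabs (unit_seq k n) = 1 * unit_seq k n.
Proof.
  unfold unit_seq. destruct (Nat.eqb n k); [rewrite Rabs_R1|rewrite Rabs_R0]; ring.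
Qed.

Lemma l1_unit k : in_l1 (unit_seq k).
Proof.
  apply (ex_series_ext (fun n => 1 * unit_seq k n)); [intros; symmetry; apply abs_unit_seq|].
  apply unit_seq_series.
Qed.

Lemma norm1_unit k : norm1 (unit_seq k) = 1.
Proof.
  unfold norm1. rewrite (Series_ext _ (fun n => 1 * unit_seq k n)) by apply abs_unit_seq.
  apply unit_seq_series.
Qed.

Lemma pairing_unit u k : pairing u (unit_seq k) = u k.
Proof. apply unit_seq_series. Qed.

Lemma norm_inf_eq w M k0 : (forall k, Rabs (w k) <= M) -> Rabs (w k0) = M -> norm_inf w = M.
Proof.
  intros Hbound Hk0. unfold norm_inf. rewrite (is_lub_Rbar_unique _ (Finite M)); [reflexivity|].
  split.
  - intros r [k ->]. apply Hbound.
  - intros l Hl. rewrite <- Hk0. apply Hl. exists k0; reflexivity.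
Qed.

Lemma norm_inf_nonzero w : norm_inf w <> 0 -> 0 < norm_inf w /\ forall k, Rabs (w k) <= norm_inf w.
Proof.
  unfold norm_inf. destruct (Lub_Rbar_correct (fun r => exists k, r = Rabs (w k))) as [Hub _].
  destruct (Lub_Rbar (fun r => exists k, r = Rabs (w k))) as [l| |]; simpl; intros Hnz;
    try (exfalso; lra).
  assert (Hle : forall k, Rabs (w k) <= l) by (intros k; apply (Hub (Rabs (w k))); eauto).
  split; [|exact Hle]. pose proof (Hle 0%nat). pose proof (Rabs_pos (w 0%nat)). lra.
Qed.

Lemma sgn_mul_self r : r * sgn r = Rabs r.
Proof.
  unfold sgn. destruct (Rlt_dec 0 r); [rewrite Rabs_pos_eq by lra; ring|].
  destruct (Rlt_dec r 0); [rewrite Rabs_left by lra; ring|].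
  replace r with 0 by lra. rewrite Rabs_R0; ring.
Qed.

Lemma Rabs_sgn r : r <> 0 -> Rabs (sgn r) = 1.
Proof.
  intros Hr. unfold sgn. destruct (Rlt_dec 0 r); [apply Rabs_R1|].
  destruct (Rlt_dec r 0); [apply Rabs_m1|lra].
Qed.

Lemma sgn_unit r : r <> 0 -> sgn r = 1 \/ sgn r = -1.
Proof.
  intros Hr. unfold sgn. destruct (Rlt_dec 0 r); [left; reflexivity|].
  destruct (Rlt_dec r 0); [right; reflexivity|lra].
Qed.

Lemma Rabs_mul_sgn r : Rabs r * sgn r = r.
Proof.
  unfold sgn. destruct (Rlt_dec 0 r); [rewrite Rabs_pos_eq by lra; ring|].
  destruct (Rlt_dec r 0); [rewrite Rabs_left by lra; ring|lra].
Qed.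

Lemma pairing_le_norm1 w M x :
  in_c0 w -> in_l1 x -> (forall k, Rabs (w k) <= M) -> pairing w x <= M * norm1 x.
Proof.
  intros Hw Hx Hbound. unfold pairing, norm1. rewrite <- Series_scal_l.
  apply series_le; [|apply pairing_ex; assumption|exact (ex_series_scal_l _ _ Hx)].
  intros k. apply (Rle_trans _ (Rabs (w k * x k))); [apply Rle_abs|].
  rewrite Rabs_mult. apply Rmult_le_compat_r; [apply Rabs_pos|apply Hbound].
Qed.

(* x is aligned with w at level M: w_k x_k = M |x_k| for every k, i.e. x puts
   its mass only where w_k = M sgn(x_k).  This is the equality case of weak duality. *)
Definition aligned (w : rseq) (M : R) (x : rseq) : Prop :=
  forall k, w k * x k = M * Rabs (x k).

Lemma aligned_of_pairing w M x :
  in_c0 w -> in_l1 x -> (forall k, Rabs (w k) <= M) -> pairing w x = M * norm1 x ->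
  aligned w M x.
Proof.
  intros Hw Hx Hbound Heq k.
  set (gap := fun k => M * Rabs (x k) - w k * x k).
  assert (Hgap : forall k, 0 <= gap k).
  { intros j. unfold gap.
    assert (w j * x j <= M * Rabs (x j)); [|lra].
    apply (Rle_trans _ (Rabs (w j * x j))); [apply Rle_abs|].
    rewrite Rabs_mult. apply Rmult_le_compat_r; [apply Rabs_pos|apply Hbound]. }
  assert (Hex : ex_series gap)
    by exact (ex_series_minus _ _ (ex_series_scal_l M _ Hx) (pairing_ex w x Hw Hx)).
  assert (Hsum : Series gap = 0).
  { unfold gap. rewrite Series_minus, Series_scal_l
      by (try exact (ex_series_scal_l _ _ Hx); apply pairing_ex; assumption).
    unfold pairing, norm1 in Heq. lra. }
  pose proof (series_nonneg_zero gap Hgap Hex Hsum k) as Hk. unfold gap in Hk. lra.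
Qed.

Lemma aligned_add_entry M wk a a' :
  Rabs wk <= M -> wk * a = M * Rabs a -> wk * a' = M * Rabs a' ->
  wk * (a + a') = M * Rabs (a + a').
Proof.
  intros Hbound Ha Ha'.
  assert (Hup : wk * (a + a') <= M * Rabs (a + a')).
  { apply (Rle_trans _ (Rabs (wk * (a + a')))); [apply Rle_abs|].
    rewrite Rabs_mult. apply Rmult_le_compat_r; [apply Rabs_pos|exact Hbound]. }
  assert (0 <= M) by (pose proof (Rabs_pos wk); lra).
  pose proof (Rabs_triang a a').
  assert (M * Rabs (a + a') <= M * (Rabs a + Rabs a')) by (apply Rmult_le_compat_l; lra).
  lra.
Qed.

Lemma aligned_conv w n lam v :
  0 < norm_inf w -> (forall k, Rabs (w k) <= norm_inf w) ->
  (forall i, (i < n)%nat -> Vset w (v i)) -> (forall i, (i < n)%nat -> 0 <= lam i) ->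
  aligned w (norm_inf w) (fun k => fsum n (fun i => lam i * v i k)).
Proof.
  intros HM Hbound HV Hlam k. induction n as [|n IH]; cbn [fsum].
  - rewrite Rabs_R0. ring.
  - apply aligned_add_entry; [apply Hbound|apply IH; intros; [apply HV|apply Hlam]; lia|].
    destruct (HV n ltac:(lia)) as [j [Hj ->]]. specialize (Hlam n ltac:(lia)).
    unfold Nmax in Hj. unfold unit_seq. destruct (Nat.eqb_spec k j) as [->|_].
    + assert (w j <> 0) by (intros E; rewrite E, Rabs_R0 in Hj; lra).
      rewrite !Rabs_mult, Rabs_sgn, Rabs_R1, (Rabs_pos_eq (lam n)) by assumption.
      replace (w j * (lam n * (sgn (w j) * 1))) with (lam n * (w j * sgn (w j))) by ring.
      rewrite sgn_mul_self, Hj. ring.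
    + rewrite !Rmult_0_r, Rabs_R0. ring.
Qed.

Lemma aligned_of_hull w x :
  scale_set (norm_inf w) (conv_hull (Vset w)) x -> aligned w (norm_inf w) x.
Proof.
  intros [x' [[n [lam [v [HV [Hlam [_ Hx']]]]]] ->]] k.
  destruct (Req_dec (norm_inf w) 0) as [HM0|HM0].
  - rewrite HM0, Rmult_0_l, Rabs_R0. ring.
  - destruct (norm_inf_nonzero w HM0) as [HM Hbound].
    pose proof (aligned_conv w n lam v HM Hbound HV Hlam k) as Hk. rewrite <- Hx' in Hk.
    rewrite Rabs_mult, Rabs_pos_eq by lra.
    replace (w k * (norm_inf w * x' k)) with (norm_inf w * (w k * x' k)) by ring.
    rewrite Hk. ring.
Qed.

Lemma aligned_entry w M x k :
  0 < M -> aligned w M x -> x k <> 0 -> Rabs (w k) = M /\ x k = sgn (w k) * Rabs (x k).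
Proof.
  intros HM Hal Hxk. specialize (Hal k).
  assert (Hxpos : 0 < Rabs (x k)) by (apply Rabs_pos_lt; exact Hxk).
  assert (Hwk : Rabs (w k) = M).
  { apply (Rmult_eq_reg_r (Rabs (x k))); [|lra].
    rewrite <- Rabs_mult, Hal, Rabs_mult, (Rabs_pos_eq M), Rabs_Rabsolu by lra. reflexivity. }
  split; [exact Hwk|].
  assert (Hw0 : w k <> 0) by (intros E; rewrite E, Rabs_R0 in Hwk; lra).
  apply (Rmult_eq_reg_l (w k)); [|exact Hw0].
  rewrite Hal, <- Hwk, <- sgn_mul_self. ring.
Qed.

Lemma aligned_finite_support w M x :
  in_c0 w -> 0 < M -> aligned w M x -> exists N, forall k, (N <= k)%nat -> x k = 0.
Proof.
  intros Hw HM Hal. apply is_lim_seq_spec in Hw.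
  destruct (Hw (mkposreal M HM)) as [N HN]. exists N. intros k Hk.
  destruct (Req_dec (x k) 0) as [E|Hxk]; [exact E|exfalso].
  specialize (HN k Hk). simpl in HN. rewrite Rminus_0_r in HN.
  destruct (aligned_entry w M x k HM Hal Hxk) as [Hwk _]. lra.
Qed.

Lemma conv_hull_vertex (V : rseq -> Prop) v : V v -> conv_hull V v.
Proof.
  intros Hv. exists 1%nat, (fun _ => 1), (fun _ => v). repeat split.
  - intros; exact Hv.
  - intros; lra.
  - cbn [fsum]; ring.
  - extensionality k. cbn [fsum]. ring.
Qed.

(* The convex weights are
   |x_k| / M over the (finite) support of x. *)
Lemma hull_of_aligned w M x :
  in_c0 w -> in_l1 x -> norm1 x = M -> (forall k, Rabs (w k) <= M) -> aligned w M x ->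
  scale_set (norm_inf w) (conv_hull (Vset w)) x.
Proof.
  intros Hw Hx Hnorm Hbound Hal.
  set (vertex := fun j k => sgn (w j) * unit_seq j k).
  destruct (Req_dec M 0) as [HM0|HMnz].
  - (* M = 0: both x and w vanish *)
    assert (Hx0 : forall k, x k = 0).
    { intros k. apply Rabs_eq_0. apply (series_nonneg_zero (fun k => Rabs (x k)));
        [intros; apply Rabs_pos|exact Hx|fold (norm1 x); lra]. }
    assert (Hnw : norm_inf w = 0).
    { apply (norm_inf_eq w 0 0%nat); [rewrite <- HM0; exact Hbound|].
      specialize (Hbound 0%nat). pose proof (Rabs_pos (w 0%nat)). lra. }
    rewrite Hnw. exists (vertex 0%nat). split.
    + apply conv_hull_vertex. exists 0%nat. split; [unfold Nmax; rewrite Hnw|reflexivity].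
      specialize (Hbound 0%nat). pose proof (Rabs_pos (w 0%nat)). lra.
    + extensionality k. rewrite Hx0. ring.
  - assert (HM : 0 < M) by (pose proof (norm1_nonneg x Hx); lra).
    destruct (norm1_support x Hx ltac:(lra)) as [k0 Hk0].
    destruct (aligned_finite_support w M x Hw HM Hal) as [N HN].
    assert (Hnw : norm_inf w = M)
      by exact (norm_inf_eq w M k0 Hbound (proj1 (aligned_entry w M x k0 HM Hal Hk0))).
    assert (Hvertex : forall j, x j <> 0 -> Vset w (vertex j)).
    { intros j Hj. exists j. split; [|reflexivity]. unfold Nmax. rewrite Hnw.
      exact (proj1 (aligned_entry w M x j HM Hal Hj)). }
    set (v := fun i => if Req_EM_T (x i) 0 then vertex k0 else vertex i).
    set (lam := fun i => Rabs (x i) / M).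
    rewrite Hnw. exists (fun k => fsum N (fun i => lam i * v i k)). split.
    + exists N, lam, v. repeat split.
      * intros i _. unfold v. destruct (Req_EM_T (x i) 0); apply Hvertex; assumption.
      * intros i _. unfold lam. apply Rdiv_le_0_compat; [apply Rabs_pos|exact HM].
      * unfold lam.
        rewrite (fsum_ext N _ (fun i => / M * Rabs (x i))) by (intros; unfold Rdiv; ring).
        rewrite fsum_scal.
        destruct (series_finite_support (fun i => Rabs (x i)) N) as [_ Hsum].
        { intros k Hk. rewrite HN by exact Hk. apply Rabs_R0. }
        rewrite <- Hsum. fold (norm1 x). rewrite Hnorm. field. lra.
    + extensionality k.
      rewrite (fsum_ext N _ (fun i => x i / M * (if Nat.eqb i k then 1 else 0))).
      * rewrite fsum_delta. destruct (Nat.ltb_spec k N); [field; lra|].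
        rewrite HN by lia. ring.
      * intros i _. unfold v, lam, vertex. destruct (Req_EM_T (x i) 0) as [E|E].
        -- rewrite E, Rabs_R0. unfold Rdiv. ring.
        -- unfold unit_seq. rewrite Nat.eqb_sym.
           rewrite (proj2 (aligned_entry w M x i HM Hal E)) at 2. unfold Rdiv. ring.
Qed.

(* Two sets of reals with A <= B elementwise, nonempty together, are separated
   by a single real.  This is the one-dimensional core of Hahn-Banach. *)
Lemma real_interpolation (A B : R -> Prop) :
  (forall a b, A a -> B b -> a <= b) ->
  ((exists a, A a) -> exists b, B b) -> ((exists b, B b) -> exists a, A a) ->
  exists delta, (forall a, A a -> a <= delta) /\ (forall b, B b -> delta <= b).
Proof.
  intros HAB HAB' HBA. destruct (classic (exists a, A a)) as [HA|HA].
  - destruct (HAB' HA) as [b0 Hb0].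
    destruct (completeness A) as [l [Hub Hleast]];
      [exists b0; intros a Ha; exact (HAB a b0 Ha Hb0)|exact HA|].
    exists l. split; [exact Hub|]. intros b Hb. apply Hleast. intros a Ha. exact (HAB a b Ha Hb).
  - exists 0. split; intros z Hz; exfalso; [apply HA; eauto|].
    apply HA, HBA. eauto.
Qed.

(* The
   linear form (t y + sum_{j<k} s_j e_j) |-> t b + sum_{j<k} s_j d_j on
   W_k = span(y, e_0, ..., e_{k-1}) is "dominated" if it never exceeds the
   l_1-norm of a representation x with L x equal to the argument.  A dominated
   form on W_k extends to a dominated form on W_{k+1}; after m steps the form
   lives on all of R^m and yields the dual certificate d. *)
Section Duality.

Variables (m : nat) (u : nat -> rseq).
Hypothesis hu : forall j, (j < m)%nat -> in_c0 (u j).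

Lemma My_ext z z' x : (forall i, (i < m)%nat -> z i = z' i) -> My m u z x -> My m u z' x.
Proof. intros Hzz [Hx Hz]. split; [exact Hx|]. intros i Hi. rewrite <- Hzz by exact Hi. auto. Qed.

Lemma My_plus z z' x x' :
  My m u z x -> My m u z' x' -> My m u (fun i => z i + z' i) (fun k => x k + x' k).
Proof.
  intros [Hx Hz] [Hx' Hz']. split; [apply l1_plus; assumption|]. intros i Hi.
  unfold Lmap in *. rewrite pairing_plus, Hz, Hz' by auto. reflexivity.
Qed.

Lemma My_scal c z x : My m u z x -> My m u (fun i => c * z i) (fun k => c * x k).
Proof.
  intros [Hx Hz]. split; [apply l1_scal; exact Hx|]. intros i Hi.
  unfold Lmap in *. rewrite pairing_scal, Hz by exact Hi. reflexivity.
Qed.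

Lemma My_zero : My m u (fun _ => 0) (fun _ => 0).
Proof.
  split.
  - apply (ex_series_ext (fun _ => 0)); [intros; rewrite Rabs_R0; reflexivity|exact ex_series_zero].
  - intros i _. unfold Lmap, pairing. rewrite (Series_ext _ (fun _ => 0)) by (intros; ring).
    exact Series_zero.
Qed.

Variables (y : nat -> R) (b : R).

Definition span_vec (k : nat) (t : R) (s : nat -> R) : nat -> R :=
  fun i => t * y i + (if Nat.ltb i k then s i else 0).

Definition span_val (k : nat) (d : nat -> R) (t : R) (s : nat -> R) : R :=
  t * b + fsum k (fun j => s j * d j).

Definition dominated (k : nat) (d : nat -> R) : Prop :=
  forall t s x, My m u (span_vec k t s) x -> span_val k d t s <= norm1 x.

Definition span_shift (k : nat) (t : R) (s : nat -> R) (sg : R) : nat -> R :=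
  fun i => span_vec k t s i + (if Nat.eqb i k then sg else 0).

Lemma span_val_plus k d t s t' s' :
  span_val k d (t + t') (fun j => s j + s' j) = span_val k d t s + span_val k d t' s'.
Proof.
  unfold span_val. rewrite (fsum_ext k _ (fun j => s j * d j + s' j * d j)) by (intros; ring).
  rewrite fsum_plus. ring.
Qed.

Lemma span_val_scal k d c t s :
  span_val k d (c * t) (fun j => c * s j) = c * span_val k d t s.
Proof.
  unfold span_val. rewrite (fsum_ext k _ (fun j => c * (s j * d j))) by (intros; ring).
  rewrite fsum_scal. ring.
Qed.

Lemma span_shift_scal k c t s sg i :
  c * span_shift k t s sg i = span_shift k (c * t) (fun j => c * s j) (c * sg) i.
Proof. unfold span_shift, span_vec. destruct (Nat.ltb i k), (Nat.eqb i k); ring. Qed.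

(* The choice of the new coefficient d_k: it must lie between the lower bounds
   coming from representations of w - e_k and the upper bounds coming from
   representations of w + e_k (w in W_k); the triangle inequality makes every
   lower bound smaller than every upper bound. *)
Lemma shift_bound k d : dominated k d ->
  exists delta, forall sg, (sg = 1 \/ sg = -1) -> forall t s x,
    My m u (span_shift k t s sg) x -> span_val k d t s + sg * delta <= norm1 x.
Proof.
  intros HD.
  assert (Hneg : forall t s x sg, My m u (span_shift k t s sg) x ->
            My m u (span_shift k (-1 * t) (fun j => -1 * s j) (-1 * sg)) (fun n => -1 * x n)).
  { intros t s x sg Hx. apply (My_ext _ _ _ (fun i _ => span_shift_scal k (-1) t s sg i)).
    apply My_scal. exact Hx. }
  set (A := fun a => exists t s x,
         My m u (span_shift k t s (-1)) x /\ a = span_val k d t s - norm1 x).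
  set (B := fun c => exists t s x,
         My m u (span_shift k t s 1) x /\ c = norm1 x - span_val k d t s).
  destruct (real_interpolation A B) as [delta [HA HB]].
  - intros a c [t [s [x [Hx ->]]]] [t' [s' [x' [Hx' ->]]]].
    assert (Hsum : My m u (span_vec k (t + t') (fun j => s j + s' j)) (fun n => x n + x' n)).
    { apply (My_ext (fun i => span_shift k t s (-1) i + span_shift k t' s' 1 i));
        [|apply My_plus; assumption].
      intros i _. unfold span_shift, span_vec. destruct (Nat.ltb i k), (Nat.eqb i k); ring. }
    pose proof (HD _ _ _ Hsum) as Hle. rewrite span_val_plus in Hle.
    pose proof (norm1_triangle x x' (proj1 Hx) (proj1 Hx')). lra.
  - intros [a [t [s [x [Hx _]]]]]. pose proof (Hneg t s x (-1) Hx) as Hx'.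
    replace (-1 * -1) with 1 in Hx' by ring.
    eexists; exists (-1 * t), (fun j => -1 * s j), (fun n => -1 * x n).
    split; [exact Hx'|reflexivity].
  - intros [c [t [s [x [Hx _]]]]]. pose proof (Hneg t s x 1 Hx) as Hx'.
    replace (-1 * 1) with (-1) in Hx' by ring.
    eexists; exists (-1 * t), (fun j => -1 * s j), (fun n => -1 * x n).
    split; [exact Hx'|reflexivity].
  - exists delta. intros sg [-> | ->] t s x Hx.
    + assert (delta <= norm1 x - span_val k d t s) by (apply HB; exists t, s, x; auto). lra.
    + assert (span_val k d t s - norm1 x <= delta) by (apply HA; exists t, s, x; auto). lra.
Qed.

Lemma dominated_extend k d : dominated k d ->
  exists delta, dominated (S k) (fun j => if Nat.eqb j k then delta else d j).
Proof.
  intros HD. destruct (shift_bound k d HD) as [delta Hdelta]. exists delta.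
  intros t s x Hx.
  assert (Hval : span_val (S k) (fun j => if Nat.eqb j k then delta else d j) t s
                 = span_val k d t s + s k * delta).
  { unfold span_val. cbn [fsum]. rewrite Nat.eqb_refl.
    rewrite (fsum_ext k _ (fun j => s j * d j)); [ring|].
    intros j Hj. destruct (Nat.eqb_spec j k); [lia|reflexivity]. }
  assert (Hvec : My m u (span_shift k t s (s k)) x).
  { apply (My_ext (span_vec (S k) t s)); [|exact Hx].
    intros i _. unfold span_shift, span_vec.
    destruct (Nat.eqb_spec i k), (Nat.ltb_spec i k), (Nat.ltb_spec i (S k)); try lia; subst; ring. }
  rewrite Hval. destruct (Req_dec (s k) 0) as [Hs0|Hs0].
  - rewrite Hs0, Rmult_0_l, Rplus_0_r. apply HD.
    apply (My_ext (span_shift k t s (s k))); [|exact Hvec].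
    intros i _. unfold span_shift. rewrite Hs0. destruct (Nat.eqb i k); ring.
  - (* rescale by 1/|s_k| to reach span_vec k + sgn(s_k) e_k *)
    set (c := / Rabs (s k)). assert (Hc : 0 < c) by (apply Rinv_0_lt_compat, Rabs_pos_lt, Hs0).
    assert (Hcs : c * s k = sgn (s k)).
    { unfold c. rewrite <- (Rabs_mul_sgn (s k)) at 2. field. apply Rabs_no_R0, Hs0. }
    pose proof (My_scal c _ _ Hvec) as Hcx.
    apply (My_ext _ _ _ (fun i _ => span_shift_scal k c t s (s k) i)) in Hcx.
    rewrite Hcs in Hcx.
    pose proof (Hdelta _ (sgn_unit _ Hs0) _ _ _ Hcx) as Hbound.
    rewrite span_val_scal, norm1_scal, Rabs_pos_eq in Hbound by lra.
    assert (Hc1 : Rabs (s k) * c = 1) by (unfold c; field; apply Rabs_no_R0, Hs0).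
    apply (Rmult_le_compat_l (Rabs (s k))) in Hbound; [|apply Rabs_pos].
    rewrite Rmult_plus_distr_l, <- !Rmult_assoc, Hc1, Rabs_mul_sgn, !Rmult_1_l in Hbound.
    exact Hbound.
Qed.

Theorem dual_certificate :
  (forall t x, My m u (fun i => t * y i) x -> t * b <= norm1 x) ->
  exists d, (forall x, in_l1 x -> fsum m (fun j => d j * pairing (u j) x) <= norm1 x) /\
            fsum m (fun j => d j * y j) = b.
Proof.
  intros Hy.
  assert (Hk : forall k, exists d, dominated k d).
  { (* on W_0 = span(y), domination is exactly the hypothesis *)
    induction k as [|k [d Hd]].
    - exists (fun _ => 0). intros t s x Hx. unfold span_val. cbn [fsum]. rewrite Rplus_0_r.
      apply Hy. apply (My_ext (span_vec 0 t s)); [|exact Hx].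
      intros i _. unfold span_vec. destruct (Nat.ltb_spec i 0); [lia|ring].
    - destruct (dominated_extend k d Hd) as [delta Hdelta]. eexists; exact Hdelta. }
  destruct (Hk m) as [d Hd]. exists d.
  split.
  - intros x Hx.
    assert (Hrep : My m u (span_vec m 0 (fun j => pairing (u j) x)) x).
    { apply (My_ext (fun j => pairing (u j) x)); [|split; [exact Hx|reflexivity]].
      intros i Hi. unfold span_vec. destruct (Nat.ltb_spec i m); [ring|lia]. }
    pose proof (Hd _ _ _ Hrep) as Hle. unfold span_val in Hle.
    rewrite (fsum_ext m _ (fun j => d j * pairing (u j) x)) in Hle by (intros; ring). lra.
  - (* test domination on the representation 0 of t y - t y, for t = 1 and t = -1 *)
    assert (Hzero : forall t, t * b - t * fsum m (fun j => d j * y j) <= 0).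
    { intros t. assert (Hrep : My m u (span_vec m t (fun j => - t * y j)) (fun _ => 0)).
      { apply (My_ext (fun _ => 0)); [|exact My_zero].
        intros i Hi. unfold span_vec. destruct (Nat.ltb_spec i m); [ring|lia]. }
      pose proof (Hd _ _ _ Hrep) as Hle. unfold span_val, norm1 in Hle.
      rewrite (Series_ext _ (fun _ => 0)), Series_zero in Hle by (intros; apply Rabs_R0).
      rewrite (fsum_ext m _ (fun j => - t * (d j * y j))), fsum_scal in Hle by (intros; ring).
      lra. }
    pose proof (Hzero 1). pose proof (Hzero (-1)). lra.
Qed.

End Duality.

(* A minimal-norm solution makes t y |-> t ||xh||_1 dominated: any x with
   L x = t y, t > 0, rescales to the competitor x / t in M_y. *)
Lemma min_norm_dominated m u y xh :
  is_min_norm_sol m u y xh ->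
  forall t x, My m u (fun i => t * y i) x -> t * norm1 xh <= norm1 x.
Proof.
  intros [[Hxh _] Hmin] t x Hx.
  pose proof (norm1_nonneg xh Hxh). pose proof (norm1_nonneg x (proj1 Hx)).
  destruct (Rle_or_lt t 0) as [Ht|Ht]; [nra|].
  assert (Hcomp : My m u y (fun k => / t * x k)).
  { apply (My_ext m u (fun i => / t * (t * y i))); [intros; field; lra|].
    apply My_scal. exact Hx. }
  pose proof (Hmin _ Hcomp) as Hle.
  rewrite norm1_scal, Rabs_pos_eq in Hle by (apply Rlt_le, Rinv_0_lt_compat, Ht).
  apply (Rmult_le_compat_l t) in Hle; [|lra].
  replace (t * (/ t * norm1 x)) with (norm1 x) in Hle by (field; lra). exact Hle.
Qed.

(* Necessity: the dual certificate d, scaled by ||xh||_1, gives the coefficients c. *)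
Lemma min_norm_necessary m u y xh :
  (forall j, (j < m)%nat -> in_c0 (u j)) -> is_min_norm_sol m u y xh ->
  exists c : nat -> R,
    let uc : rseq := fun k => fsum m (fun j => c j * u j k) in
    scale_set (norm_inf uc) (conv_hull (Vset uc)) xh.
Proof.
  intros hu Hmin. pose proof Hmin as [[Hxh Hy] _]. set (b := norm1 xh).
  destruct (dual_certificate m u hu y b (min_norm_dominated m u y xh Hmin)) as [d [Hd Hdy]].
  (* v := sum_j d_j u_j has sup norm <= 1, tested against +e_k and -e_k *)
  set (v := fun k => fsum m (fun j => d j * u j k)).
  assert (Hv : forall x, in_l1 x -> pairing v x <= norm1 x).
  { intros x Hx. unfold v. rewrite pairing_comb by assumption. exact (Hd x Hx). }
  assert (Hv1 : forall k, Rabs (v k) <= 1).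
  { intros k. pose proof (Hv _ (l1_unit k)) as Hpos.
    pose proof (Hv _ (l1_scal (-1) _ (l1_unit k))) as Hneg.
    rewrite pairing_scal, pairing_unit, norm1_scal, norm1_unit, Rabs_m1 in Hneg.
    rewrite pairing_unit, norm1_unit in Hpos. apply Rabs_le. lra. }
  exists (fun j => b * d j). cbv zeta.
  set (uc := fun k => fsum m (fun j => b * d j * u j k)).
  assert (Huc : forall k, uc k = b * v k).
  { intros k. unfold uc, v. rewrite <- fsum_scal. apply fsum_ext. intros; ring. }
  assert (Hb : 0 <= b) by exact (norm1_nonneg xh Hxh).
  assert (Hbound : forall k, Rabs (uc k) <= b).
  { intros k. rewrite Huc, Rabs_mult, Rabs_pos_eq by exact Hb. specialize (Hv1 k). nra. }
  assert (Hc0 : in_c0 uc) by (apply c0_comb; exact hu).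
  apply (hull_of_aligned uc b xh Hc0 Hxh eq_refl Hbound).
  apply (aligned_of_pairing uc b xh Hc0 Hxh Hbound).
  unfold uc. rewrite pairing_comb by assumption. fold b. rewrite <- Hdy, <- fsum_scal.
  apply fsum_ext. intros j Hj. unfold Lmap in Hy. rewrite Hy by exact Hj. ring.
Qed.

(* Sufficiency: alignment with uc turns weak duality into an equality at xh. *)
Lemma min_norm_sufficient m u y xh c :
  (forall j, (j < m)%nat -> in_c0 (u j)) -> My m u y xh ->
  scale_set (norm_inf (fun k => fsum m (fun j => c j * u j k)))
            (conv_hull (Vset (fun k => fsum m (fun j => c j * u j k)))) xh ->
  forall x, My m u y x -> norm1 xh <= norm1 x.
Proof.
  set (uc := fun k => fsum m (fun j => c j * u j k)).
  intros hu [Hxh Hyh] Hhull x [Hx Hy]. set (M := norm_inf uc).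
  destruct (Req_dec M 0) as [HM0|HMnz].
  - destruct Hhull as [w [_ ->]]. fold M. rewrite HM0, norm1_scal, Rabs_R0, Rmult_0_l.
    exact (norm1_nonneg x Hx).
  - destruct (norm_inf_nonzero uc HMnz) as [HM Hbound]. fold M in HM, Hbound.
    assert (Hc0 : in_c0 uc) by (apply c0_comb; exact hu).
    assert (Hal : aligned uc M xh) by exact (aligned_of_hull uc xh Hhull).
    assert (Heq : pairing uc xh = M * norm1 xh).
    { unfold pairing, norm1. rewrite <- Series_scal_l. apply Series_ext. exact Hal. }
    assert (Hsame : pairing uc xh = pairing uc x).
    { unfold uc. rewrite !pairing_comb by assumption. apply fsum_ext. intros j Hj.
      unfold Lmap in *. rewrite Hyh, Hy by exact Hj. reflexivity. }
    pose proof (pairing_le_norm1 uc M x Hc0 Hx Hbound).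
    apply (Rmult_le_reg_l M); [exact HM|]. lra.
Qed.

Theorem mainTheorem8 (m : nat) (u : nat -> rseq) (y : nat -> R) (xh : rseq)
  (hu : forall j, (j < m)%nat -> in_c0 (u j))
  (hind : lin_indep m u)
  (hxh : in_l1 xh) :
  is_min_norm_sol m u y xh <->
  (My m u y xh /\
   exists c : nat -> R,
     let uc : rseq := fun k => fsum m (fun j => c j * u j k) in
     scale_set (norm_inf uc) (conv_hull (Vset uc)) xh).
Proof.
  split.
  - intros Hmin. split; [exact (proj1 Hmin)|]. exact (min_norm_necessary m u y xh hu Hmin).
  - intros [HMy [c Hhull]]. split; [exact HMy|].
    exact (min_norm_sufficient m u y xh c hu HMy Hhull).
Qed.
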